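(* Let $S,T$ be measurement scenarios and let $G_{S,T}$ be the set of global assignments $t\in\mathcal E_{[S,T]}(X_T)$ such that $\delta_t$ satisfies $g_{S,T}$. Then probabilistic procedures $S\to T$ correspond bijectively to probability distributions on $G_{S,T}$, via $\sum_ir_if_i\mapsto\sum_ir_i\delta_{t_{f_i}}$ where $t_f=((\pi_f(x),\alpha_{f,x}))_{x\in X_T}$. Moreover, the empirical models $\sum_ir_i\delta_{t_{f_i}}$ on $[S,T]$ arising from probabilistic procedures are exactly the non-contextual empirical models on $[S,T]$ that satisfy $g_{S,T}$.
   Context: A simplicial complex $\Sigma$ on a finite set $X$ is a family of subsets containing $\emptyset$ and all singletons, closed under subsets. A measurement scenario $S=(X_S,O_S,\Sigma_S)$: finite set $X_S$, finite non-empty outcome sets $O_{S,x}$, simplicial complex $\Sigma_S$ of contexts. $\mathcal E_S(U)=\prod_{x\in U}O_{S,x}$, restriction $s|_V$. An empirical model on $S$ is a family $(e_\sigma)_{\sigma\in\Sigma_S}$ of probability distributions on $\mathcal E_S(\sigma)$ compatible under marginalisation; $\delta_t$ is the model with $(\delta_t)_\sigma$ the point mass at $t|_\sigma$; a model is non-contextual if it is a convex combination of deterministic models $\delta_t$. A simplicial relation from $\Sigma$ (on $X$) to $\Delta$ (on $Y$) is a relation $R\subseteq X\times Y$ with $R(\sigma)\in\Delta$ for all $\sigma\in\Sigma$. A deterministic procedure $f\colon S\to T$ is a pair $(\pi_f,\alpha_f)$: $\pi_f$ a simplicial relation from $\Sigma_T$ to $\Sigma_S$ and $\alpha_{f,x}\colon\mathcal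 E_S(\pi_f(x))\to O_{T,x}$ for $x\in X_T$. A probabilistic procedure $S\to T$ is a finitely supported probability distribution on deterministic procedures $S\to T$, written $\sum_ir_if_i$. The scenario $[S,T]$ has $X_{[S,T]}=X_T$, $\Sigma_{[S,T]}=\Sigma_T$, $O_{[S,T],x}=\{(U,\beta):U\subseteq X_S,\ \beta\colon\mathcal E_S(U)\to O_{T,x}\}$. A model $e$ on $[S,T]$ satisfies $g_{S,T}$ iff for every $\sigma\in\Sigma_T$ and every $((U_x,\beta_x))_{x\in\sigma}$ in the support of $e_\sigma$, $\bigcup_{x\in\sigma}U_x\in\Sigma_S$. *)

From HB Require Import structures.
From mathcomp Require Import all_boot all_order all_algebra.
From mathcomp Require Import reals.
Set Implicit Arguments. Unset Strict Implicit. Unset Printing Implicit Defensive.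
Import Order.TTheory GRing.Theory Num.Theory.
Local Open Scope ring_scope.

Definition is_simplicial_complex (X : finType) (Sig : {set {set X}}) : Prop :=
  [/\ set0 \in Sig, (forall x : X, [set x] \in Sig) &
      (forall A B : {set X}, A \in Sig -> B \subset A -> B \in Sig)].

Record scenario := Scenario {
  sX : finType;
  sO : sX -> finType;
  sO_nonempty : forall x : sX, (0 < #|sO x|)%N;
  sSigma : {set {set sX}};
  sSigma_cplx : is_simplicial_complex sSigma }.

(* Partial assignments: a dependent function x |-> option (O x).
   An element of E_S(U) = prod_{x in U} O_{S,x} is represented as a partial
   assignment whose domain (the x with a value) is exactly U. *)
Definition assign (S : scenario) := {dffun forall x : sX S, option (@sO S x)}.

Definition dom_is (S : scenario) (U : {set sX S}) (s : assign S) : bool :=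
  [forall x, (s x != None) == (x \in U)].

Definition Asg (S : scenario) (U : {set sX S}) := {s : assign S | dom_is U s}.

Definition restrict_asg (S : scenario) (V : {set sX S}) (s : assign S) : assign S :=
  [ffun x => if x \in V then s x else None].

Definition is_dist (R : realType) (T : finType) (p : {ffun T -> R}) : Prop :=
  (forall t, 0 <= p t) /\ \sum_t p t = 1.

(* Families (e_sigma) indexed by subsets; only sigma in Sigma_S matter. *)
Definition emp_model (R : realType) (S : scenario) :=
  forall sigma : {set sX S}, {ffun Asg sigma -> R}.

Definition model_eq (R : realType) (S : scenario) (e e' : emp_model R S) : Prop :=
  forall sigma, sigma \in sSigma S -> e sigma = e' sigma.

Definition is_model (R : realType) (S : scenario) (e : emp_model R S) : Prop :=
  forall sigma, sigma \in sSigma S ->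
    is_dist (e sigma) /\
    (forall tau, tau \in sSigma S -> tau \subset sigma ->
       forall s' : Asg tau,
         e tau s' = \sum_(s : Asg sigma | restrict_asg tau (val s) == val s') e sigma s).

Definition det_model (R : realType) (S : scenario) (t : Asg [set: sX S]) : emp_model R S :=
  fun sigma => [ffun s : Asg sigma => if val s == restrict_asg sigma (val t) then 1 else 0].

Definition mix_model (R : realType) (S : scenario) (d : {ffun Asg [set: sX S] -> R})
  : emp_model R S :=
  fun sigma => [ffun s : Asg sigma => \sum_t d t * det_model R t sigma s].

Definition noncontextual (R : realType) (S : scenario) (e : emp_model R S) : Prop :=
  exists d : {ffun Asg [set: sX S] -> R}, is_dist d /\ model_eq e (mix_model d).

Definition homO (S T : scenario) (x : sX T) : finType :=
  {U : {set sX S} & {ffun Asg U -> @sO T x}}.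

Lemma homO_nonempty (S T : scenario) (x : sX T) : (0 < #|homO S x|)%N.
Proof.
case/card_gt0P: (sO_nonempty x) => o _.
apply/card_gt0P.
by exists (@Tagged _ set0 (fun U : {set sX S} => {ffun Asg U -> @sO T x}) [ffun _ => o]).
Qed.

Definition scen_hom (S T : scenario) : scenario :=
  @Scenario (sX T) (@homO S T) (@homO_nonempty S T) (sSigma T) (sSigma_cplx T).

Definition outset (S T : scenario) (x : sX T) (o : option (homO S x))
  : {set sX S} := oapp (@tag _ _) set0 o.

Definition satg (R : realType) (S T : scenario) (e : emp_model R (scen_hom S T)) : bool :=
  [forall sigma in sSigma T, forall s : Asg (S := scen_hom S T) sigma,
     (e sigma s != 0) ==>
       ((\bigcup_(x in sigma) outset (S := S) (val s x)) \in sSigma S)].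

Definition Gtype (R : realType) (S T : scenario) :=
  {t : Asg (S := scen_hom S T) [set: sX T] | satg (det_model R t)}.

Definition relimg (X Y : finType) (Rl : {set X * Y}) (A : {set X}) : {set Y} :=
  [set y | [exists x in A, (x, y) \in Rl]].

Definition simplicial_rel (S T : scenario) (Rl : {set sX T * sX S}) : bool :=
  [forall sigma in sSigma T, relimg Rl sigma \in sSigma S].

Definition srel (S T : scenario) := {Rl : {set sX T * sX S} | simplicial_rel Rl}.

Definition proc (S T : scenario) :=
  {rl : srel S T &
     {dffun forall x : sX T, {ffun Asg (relimg (val rl) [set x]) -> @sO T x}}}.

Definition pi_f (S T : scenario) (f : proc S T) : {set sX T * sX S} := val (tag f).

Definition t_raw (S T : scenario) (f : proc S T) : assign (scen_hom S T) :=
  [ffun x => Some (@Tagged _ (relimg (pi_f f) [set x])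
                          (fun U : {set sX S} => {ffun Asg U -> @sO T x})
                          (tagged f x))].

Lemma t_raw_dom (S T : scenario) (f : proc S T) : @dom_is (scen_hom S T) [set: sX T] (t_raw f).
Proof. by apply/forallP => x; rewrite ffunE in_setT. Qed.

Definition t_of (S T : scenario) (f : proc S T) : Asg (S := scen_hom S T) [set: sX T] :=
  exist _ (t_raw f) (t_raw_dom f).

Definition proc_to_G (R : realType) (S T : scenario) (p : {ffun proc S T -> R})
  : {ffun Gtype R S T -> R} :=
  [ffun g => \sum_f p f * (val g == t_of f)%:R].

Definition pmodel (R : realType) (S T : scenario) (p : {ffun proc S T -> R})
  : emp_model R (scen_hom S T) :=
  fun sigma => [ffun s => \sum_f p f * det_model R (t_of f) sigma s].

From HB Require Import structures.
From mathcomp Require Import all_boot all_order all_algebra.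
From mathcomp Require Import reals.
Import Order.TTheory GRing.Theory Num.Theory.
Local Open Scope ring_scope.
Set Implicit Arguments. Unset Strict Implicit. Unset Printing Implicit Defensive.

(* The map f |-> t_f is a bijection between deterministic procedures S -> T
   and the set G_{S,T}: t_f satisfies g_{S,T} because the union of the sets
   pi_f(x), x in sigma, is the image pi_f(sigma), which is a context of S;
   conversely a global assignment ((U_x, beta_x))_x in G_{S,T} is t_f for the
   relation pi = {(x, y) | y in U_x}, whose images of contexts are contexts
   precisely because delta_t satisfies g_{S,T}.
   Hence the map sum_i r_i f_i |-> sum_i r_i delta_{t_{f_i}} is the pushforward
   of distributions along a bijection, which is itself a bijection between
   distributions (first three claims).  For the last claim we show, for any
   distribution d on global assignments, that the mixture sum_t d(t) delta_t
   is an empirical model, and that it satisfies g_{S,T} iff every t in the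
   support of d lies in G_{S,T}; the models coming from procedures are then
   exactly the mixtures of distributions supported on G_{S,T}. *)

Lemma sum_delta (R : pzSemiRingType) (B : finType) (F : B -> R) (c : B) :
  \sum_b F b * (b == c)%:R = F c.
Proof.
rewrite (bigD1 c) //= eqxx mulr1 big1 ?addr0 // => b /negPf ->.
by rewrite mulr0.
Qed.

Section Pushforward.
Variables (R : realType) (A B : finType) (h : A -> B).

Lemma sum_reindex_support (F : B -> R) :
  injective h -> (forall b, F b != 0 -> exists a, b = h a) ->
  \sum_b F b = \sum_a F (h a).
Proof.
move=> h_inj h_cover.
transitivity (\sum_b \sum_a F b * (b == h a)%:R).
  apply: eq_bigr => b _; have [->|nzFb] := eqVneq (F b) 0.
    by rewrite big1 // => a _; rewrite mul0r.
  have [a0 ->] := h_cover b nzFb.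
  rewrite (bigD1 a0) //= eqxx mulr1 big1 ?addr0 // => a /negPf a_neq.
  by rewrite (inj_eq h_inj) eq_sym a_neq mulr0.
by rewrite exchange_big; apply: eq_bigr => a _; apply: sum_delta.
Qed.

Definition pushforward (p : {ffun A -> R}) : {ffun B -> R} :=
  [ffun b => \sum_a p a * (b == h a)%:R].

Lemma pushforward_dist (p : {ffun A -> R}) : is_dist p -> is_dist (pushforward p).
Proof.
move=> [p_ge0 p_sum1]; split=> [b|].
  by rewrite ffunE; apply: sumr_ge0 => a _; apply: mulr_ge0.
under eq_bigr do rewrite ffunE.
rewrite exchange_big -[RHS]p_sum1; apply: eq_bigr => a _ /=.
exact: (sum_delta (fun=> p a) (h a)).
Qed.

Lemma pushforward_supp (p : {ffun A -> R}) (b : B) :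
  pushforward p b != 0 -> exists a, b = h a.
Proof.
have [a /eqP -> _|b_out] := pickP (fun a => b == h a); first by exists a.
by rewrite ffunE big1 ?eqxx // => a _; rewrite b_out mulr0.
Qed.

Hypothesis h_inj : injective h.

Lemma pushforwardE (p : {ffun A -> R}) (a : A) : pushforward p (h a) = p a.
Proof.
rewrite ffunE; under eq_bigr do rewrite (inj_eq h_inj) eq_sym.
exact: (sum_delta (fun a => p a)).
Qed.

Lemma pushforward_inj (p p' : {ffun A -> R}) :
  pushforward p = pushforward p' -> p = p'.
Proof. by move=> E; apply/ffunP => a; rewrite -!pushforwardE E. Qed.

Section Pullback.
Variable q : {ffun B -> R}.
Hypothesis q_supp : forall b, q b != 0 -> exists a, b = h a.

Definition pullback : {ffun A -> R} := [ffun a => q (h a)].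

Lemma pullback_dist : is_dist q -> is_dist pullback.
Proof.
move=> [q_ge0 q_sum1]; split=> [a|]; first by rewrite ffunE.
rewrite -[RHS]q_sum1 (sum_reindex_support h_inj q_supp).
by apply: eq_bigr => a _; rewrite ffunE.
Qed.

Lemma pushforward_pullback : pushforward pullback = q.
Proof.
apply/ffunP => b; have [qb0|nzqb] := eqVneq (q b) 0.
  rewrite ffunE qb0 big1 // => a _; rewrite ffunE.
  by case: eqP => [<-|_]; rewrite ?qb0 ?mul0r ?mulr0.
by have [a ->] := q_supp nzqb; rewrite pushforwardE ffunE.
Qed.

End Pullback.
End Pushforward.

Lemma relimg1 (X Y : finType) (Rl : {set X * Y}) (x : X) (y : Y) :
  (y \in relimg Rl [set x]) = ((x, y) \in Rl).
Proof.
rewrite inE; apply/existsP/idP => [[x' /andP[/set1P -> //]]|xy_in].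
by exists x; rewrite inE eqxx.
Qed.

Lemma bigcup_relimg (X Y : finType) (Rl : {set X * Y}) (A : {set X}) :
  \bigcup_(x in A) relimg Rl [set x] = relimg Rl A.
Proof.
apply/setP => y; apply/bigcupP/idP => [[x xA]|].
  by rewrite relimg1 inE => xy; apply/existsP; exists x; rewrite xA.
by rewrite inE => /existsP[x /andP[xA xy]]; exists x; rewrite ?relimg1.
Qed.

Section Mixtures.
Variables (R : realType) (S : scenario).

Lemma restrict_dom (sigma : {set sX S}) (t : Asg [set: sX S]) :
  dom_is sigma (restrict_asg sigma (val t)).
Proof.
apply/forallP => x; rewrite ffunE; case: ifP => //= _.
by have := forallP (valP t) x; rewrite in_setT.
Qed.

Definition restrictA (sigma : {set sX S}) (t : Asg [set: sX S]) : Asg sigma :=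
  exist (dom_is sigma) _ (restrict_dom sigma t).

Lemma restrict_restrict (tau sigma : {set sX S}) (v : assign S) :
  tau \subset sigma -> restrict_asg tau (restrict_asg sigma v) = restrict_asg tau v.
Proof.
move=> sub; apply/ffunP => x; rewrite !ffunE.
by case: ifP => // x_tau; rewrite (subsetP sub x x_tau).
Qed.

Lemma det_model_ge0 (t : Asg [set: sX S]) sigma s : 0 <= det_model R t sigma s.
Proof. by rewrite ffunE; case: eqP. Qed.

Lemma det_model_dist (t : Asg [set: sX S]) sigma : is_dist (det_model R t sigma).
Proof.
split=> [|]; first exact: det_model_ge0.
rewrite (bigD1 (restrictA sigma t)) //= ffunE eqxx big1 ?addr0 // => s s_neq.
by rewrite ffunE; case: eqP => // s_eq; case/eqP: s_neq; apply: val_inj.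
Qed.

Lemma det_model_marg (t : Asg [set: sX S]) (sigma tau : {set sX S}) (s' : Asg tau) :
  tau \subset sigma ->
  det_model R t tau s' =
  \sum_(s : Asg sigma | restrict_asg tau (val s) == val s') det_model R t sigma s.
Proof.
move=> sub; rewrite big_mkcond (bigD1 (restrictA sigma t)) //= big1 ?addr0.
  by rewrite !ffunE eqxx /= restrict_restrict // eq_sym; case: eqP.
move=> s s_neq; rewrite ffunE; case: ifP => // _.
by case: eqP => // s_eq; case/eqP: s_neq; apply: val_inj.
Qed.

Lemma mix_is_model (d : {ffun Asg [set: sX S] -> R}) :
  is_dist d -> is_model (mix_model d).
Proof.
move=> [d_ge0 d_sum1] sigma _; split.
  split=> [s|].
    rewrite ffunE; apply: sumr_ge0 => t _.
    by apply: mulr_ge0; [apply: d_ge0 | apply: det_model_ge0].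
  under eq_bigr do rewrite ffunE.
  rewrite exchange_big /= -d_sum1; apply: eq_bigr => t _.
  by rewrite -mulr_sumr; case: (det_model_dist t sigma) => _ ->; rewrite mulr1.
move=> tau _ sub s'; rewrite ffunE.
under [RHS]eq_bigr do rewrite ffunE.
rewrite exchange_big /=; apply: eq_bigr => t _.
by rewrite -mulr_sumr (det_model_marg _ s' sub).
Qed.

Lemma is_model_eq (e e' : emp_model R S) : model_eq e e' -> is_model e' -> is_model e.
Proof.
move=> ee' e'_model sigma sigma_in; rewrite (ee' _ sigma_in).
have [e'_dist e'_marg] := e'_model _ sigma_in; split=> // tau tau_in sub s'.
by rewrite (ee' _ tau_in) e'_marg.
Qed.

Lemma mix_pushforward (A : finType) (h : A -> Asg [set: sX S]) (p : {ffun A -> R})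
  sigma s :
  mix_model (pushforward h p) sigma s = \sum_a p a * det_model R (h a) sigma s.
Proof.
rewrite ffunE; under eq_bigr do rewrite ffunE mulr_suml.
rewrite exchange_big; apply: eq_bigr => a _ /=.
under eq_bigr do rewrite mulrAC [_ * det_model _ _ _ _]mulrC.
by rewrite (sum_delta (fun t => det_model R t sigma s * p a)) mulrC.
Qed.

End Mixtures.

Section Satg.
Variables (R : realType) (S T : scenario).

Local Notation ST := (scen_hom S T).

Lemma satg_detP (t : Asg (S := ST) [set: sX T]) :
  reflect (forall sigma, sigma \in sSigma T ->
             \bigcup_(x in sigma) outset (S := S) (val t x) \in sSigma S)
          (satg (det_model R t)).
Proof.
have outset_restr (sigma : {set sX T}) : \bigcup_(x in sigma) outset (S := S)
    (restrict_asg (S := ST) sigma (val t) x) = \bigcup_(x in sigma) outset (val t x).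
  by apply: eq_bigr => x x_in; rewrite ffunE x_in.
apply: (iffP forallP) => [sat sigma sigma_in|sat sigma].
  have := forallP (implyP (sat sigma) sigma_in) (@restrictA ST sigma t).
  by rewrite ffunE eqxx oner_neq0 /= outset_restr.
apply/implyP => sigma_in; apply/forallP => s; apply/implyP.
rewrite ffunE; case: ifP => [/eqP -> _|_]; last by rewrite eqxx.
by rewrite outset_restr; apply: sat.
Qed.

Lemma satg_model_eq (e e' : emp_model R ST) : model_eq e e' -> satg e = satg e'.
Proof.
move=> ee'; apply/forallP/forallP => sat sigma; apply/implyP => sigma_in;
  by have := implyP (sat sigma) sigma_in; rewrite (ee' _ sigma_in).
Qed.

Lemma satg_mix (d : {ffun Asg (S := ST) [set: sX T] -> R}) :
  (forall t, 0 <= d t) ->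
  satg (mix_model d) <-> (forall t, d t != 0 -> satg (det_model R t)).
Proof.
move=> d_ge0; split=> [sat t nz_dt|sat].
  apply/forallP => sigma; apply/implyP => sigma_in; apply/forallP => s.
  apply/implyP => nz_det; apply: (implyP (forallP (implyP (forallP sat _) sigma_in) s)).
  have terms_ge0 u : true -> 0 <= d u * det_model R u sigma s.
    by move=> _; apply: mulr_ge0; [apply: d_ge0 | apply: det_model_ge0].
  rewrite ffunE; apply/eqP => /(psumr_eq0P terms_ge0)/(_ t isT)/eqP.
  by rewrite mulf_eq0 (negPf nz_dt) (negPf nz_det).
apply/forallP => sigma; apply/implyP => sigma_in; apply/forallP => s.
rewrite ffunE; apply/implyP => nz_mix.
have [t nz_term|zero] := pickP (fun t => d t * det_model R t sigma s != 0); last first.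
  by case/eqP: nz_mix; apply: big1 => t _; apply/eqP/negbFE/zero.
have [nz_dt nz_det] : d t != 0 /\ det_model R t sigma s != 0.
  by split; apply: contraNneq nz_term => ->; rewrite ?mul0r ?mulr0.
exact: (implyP (forallP (implyP (forallP (sat t nz_dt) sigma) sigma_in) s)).
Qed.

End Satg.

Section ProceduresAsAssignments.
Variables (S T : scenario).

Local Notation ST := (scen_hom S T).

Lemma t_of_satg (R : realType) (f : proc S T) : satg (det_model R (t_of f)).
Proof.
apply/satg_detP => sigma sigma_in.
have -> : \bigcup_(x in sigma) outset (S := S) (val (t_of f) x) = relimg (pi_f f) sigma.
  by rewrite -bigcup_relimg; apply: eq_bigr => x _; rewrite /= ffunE.
exact: (implyP (forallP (valP (tag f)) sigma) sigma_in).
Qed.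

Lemma t_of_inj : injective (@t_of S T).
Proof.
move=> [[Rl Rl_simpl] alpha] [[Rl' Rl'_simpl] alpha'] /(congr1 val) t_eq.
have tag_eq x : Tagged (fun U : {set sX S} => {ffun Asg U -> @sO T x}) (alpha x)
               = Tagged (fun U : {set sX S} => {ffun Asg U -> @sO T x}) (alpha' x).
  by have := congr1 (fun t : assign ST => t x) t_eq; rewrite /= !ffunE => -[].
have Rl_eq : Rl = Rl'.
  apply/setP => -[x y]; have := congr1 (@tag _ _) (tag_eq x).
  by rewrite /pi_f /= -!relimg1 => ->.
subst Rl'; have -> : Rl'_simpl = Rl_simpl by apply: bool_irrelevance.
by congr existT; apply/ffunP => x; apply: eq_from_Tagged (tag_eq x).
Qed.

(* Every element of G_{S,T} is t_f for the procedure with pi_f(x) = U_x. *)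
Lemma G_surj (R : realType) (t : Asg (S := ST) [set: sX T]) :
  satg (det_model R t) -> exists f : proc S T, t = t_of f.
Proof.
move=> /satg_detP sat.
pose Rl : {set sX T * sX S} := [set xy | xy.2 \in outset (S := S) (val t xy.1)].
have Rl1 x : relimg Rl [set x] = outset (S := S) (val t x).
  by apply/setP => y; rewrite relimg1 inE.
have Rl_simpl : simplicial_rel Rl.
  apply/forallP => sigma; apply/implyP => sigma_in.
  by rewrite -bigcup_relimg (eq_bigr _ (fun x _ => Rl1 x)); apply: sat.
have /fin_all_exists[alpha alphaE] x :
    exists a : {ffun Asg (relimg Rl [set x]) -> @sO T x},
      val t x = Some (Tagged (fun U : {set sX S} => {ffun Asg U -> @sO T x}) a).
  rewrite Rl1; have := forallP (valP t) x; rewrite in_setT.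
  by case: (val t x) => [[U beta]|] //= _; exists beta.
exists (existT _ (exist _ Rl Rl_simpl) (finfun alpha)).
by apply: val_inj; symmetry; apply/ffunP => x; rewrite /= !ffunE alphaE.
Qed.

Lemma pmodel_mix (R : realType) (p : {ffun proc S T -> R}) :
  model_eq (pmodel p) (mix_model (pushforward (@t_of S T) p)).
Proof. by move=> sigma _; apply/ffunP => s; rewrite mix_pushforward ffunE. Qed.

Lemma procedure_models (R : realType) (e : emp_model R ST) :
  (exists p : {ffun proc S T -> R}, is_dist p /\ model_eq e (pmodel p))
  <-> [/\ is_model e, noncontextual e & satg e].
Proof.
split=> [[p [p_dist e_pmodel]]|[_ [d [d_dist e_mix]] e_satg]].
- pose d := pushforward (@t_of S T) p.
  have e_mix : model_eq e (mix_model d).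
    by move=> sigma sigma_in; rewrite e_pmodel // pmodel_mix.
  have d_dist : is_dist d by apply: pushforward_dist.
  split; [exact: is_model_eq e_mix (mix_is_model d_dist) | by exists d |].
  rewrite (satg_model_eq e_mix) satg_mix; last by case: d_dist.
  by move=> t /pushforward_supp[f ->]; apply: t_of_satg.
- have [d_ge0 _] := d_dist.
  have d_G : forall t, d t != 0 -> satg (det_model R t).
    by apply/(satg_mix d_ge0); rewrite -(satg_model_eq e_mix).
  have d_supp t (nz_dt : d t != 0) : exists f, t = t_of f := G_surj (d_G t nz_dt).
  exists (pullback (@t_of S T) d).
  split; first exact: (pullback_dist t_of_inj d_supp).
  move=> sigma sigma_in; rewrite e_mix // (pmodel_mix _ sigma_in).
  by rewrite (pushforward_pullback t_of_inj d_supp).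
Qed.

End ProceduresAsAssignments.

Theorem mainTheorem9 (R : realType) (S T : scenario) :
  [/\ (forall p : {ffun proc S T -> R}, is_dist p -> is_dist (proc_to_G p)),
      (forall p p' : {ffun proc S T -> R},
         is_dist p -> is_dist p' -> proc_to_G p = proc_to_G p' -> p = p'),
      (forall q : {ffun Gtype R S T -> R}, is_dist q ->
         exists p : {ffun proc S T -> R}, is_dist p /\ proc_to_G p = q) &
      (forall e : emp_model R (scen_hom S T),
         (exists p : {ffun proc S T -> R}, is_dist p /\ model_eq e (pmodel p))
         <-> [/\ is_model e, noncontextual e & satg e])].
Proof.
pose h (f : proc S T) : Gtype R S T := exist _ (t_of f) (t_of_satg R f).
have h_inj : injective h by move=> f f' /(congr1 val) /t_of_inj.
have h_onto (g : Gtype R S T) : exists f, g = h f.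
  by have [f f_eq] := G_surj (valP g); exists f; apply: val_inj.
have to_G_push (p : {ffun proc S T -> R}) : proc_to_G p = pushforward h p by [].
split.
- by move=> p p_dist; rewrite to_G_push; apply: pushforward_dist.
- by move=> p p' _ _; rewrite !to_G_push => /(pushforward_inj h_inj).
- move=> q q_dist; have q_supp (g : Gtype R S T) : q g != 0 -> exists f, g = h f.
    by move=> _; apply: h_onto.
  exists (pullback h q); rewrite to_G_push.
  by split; [apply: pullback_dist | apply: pushforward_pullback].
exact: procedure_models.
Qed.
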